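(* Let $M=\mathbb N\cup\{0\}$ with base point $0$ and metric $d(n,0)=n!$ for $n\ge1$ and $d(n,m)=n!+m!$ for distinct $n,m\ge1$. Define $f\colon M\to M$ by $f(0)=0$ and $f(n)=n-1$ for $n\ge1$. Then $f$ is Lipschitz, $f(M)=M$ is not totally bounded, and $\widehat f\colon\mathcal F(M)\to\mathcal F(M)$ is compact.
   Context: Scalars are $\mathbb K=\mathbb R$ or $\mathbb C$. For a pointed metric space $(M,d,0_M)$, $\mathrm{Lip}_0(M)$ denotes the Banach space of Lipschitz functions $g\colon M\to\mathbb K$ with $g(0_M)=0$ normed by the best Lipschitz constant; $\delta(x)\in\mathrm{Lip}_0(M)^*$ is evaluation at $x$; the Lipschitz-free space $\mathcal F(M)$ is the norm-closed linear span of $\{\delta(x):x\in M\}$ in $\mathrm{Lip}_0(M)^*$. For a Lipschitz map $f\colon M\to N$ with $f(0_M)=0_N$, $\widehat f\colon\mathcal F(M)\to\mathcal F(N)$ is the unique bounded linear operator with $\widehat f(\delta(x))=\delta(f(x))$ for all $x\in M$. *)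

From mathcomp Require Import all_boot all_order all_algebra.
From mathcomp Require Import reals.
From mathcomp.real_closed Require Export complex.
Set Implicit Arguments. Unset Strict Implicit. Unset Printing Implicit Defensive.
Import Order.TTheory GRing.Theory Num.Theory.
Local Open Scope ring_scope.

(* The pointed metric space M = {0,1,2,...} (carrier nat), base point 0,
   d(n,0) = d(0,n) = n!, d(n,m) = n! + m! for distinct n,m >= 1, d(n,n) = 0.
   All distances are natural numbers, so d is nat-valued. *)
Definition Mdist (n m : nat) : nat :=
  if n == m then 0%N
  else if n == 0%N then m`!
  else if m == 0%N then n`!
  else (n`! + m`!)%N.

Definition fM (n : nat) : nat := n.-1.

Definition M_lipschitz (R : realType) (h : nat -> nat) : Prop :=
  exists L : R, forall x y : nat, (Mdist (h x) (h y))%:R <= L * (Mdist x y)%:R.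

Definition M_totally_bounded (R : realType) : Prop :=
  forall eps : R, 0 < eps ->
    exists (n : nat) (c : nat -> nat),
      forall x : nat, exists i : nat, (i < n)%N /\ (Mdist x (c i))%:R < eps.

Definition Lip0 (K : numFieldType) (g : nat -> K) : Prop :=
  g 0%N = 0 /\
  exists L : K, forall x y : nat, `|g x - g y| <= L * (Mdist x y)%:R.

Definition lip1 (K : numFieldType) (g : nat -> K) : Prop :=
  forall x y : nat, `|g x - g y| <= (Mdist x y)%:R.

(* Functionals on Lip_0(M); only their values on Lip_0(M) are relevant. *)
Definition functional (K : numFieldType) := (nat -> K) -> K.

Definition fsub (K : numFieldType) (phi psi : functional K) : functional K :=
  fun g => phi g - psi g.

Definition dnorm_le (K : numFieldType) (phi : functional K) (c : K) : Prop :=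
  forall g : nat -> K, Lip0 g -> lip1 g -> `|phi g| <= c.

Definition delta (K : numFieldType) (x : nat) : functional K := fun g => g x.

(* phi lies in the linear span of {delta(x) : x \in M} (as an element of
   Lip_0(M)^*, i.e. agreeing with a finite combination on Lip_0(M)). *)
Definition in_span_delta (K : numFieldType) (phi : functional K) : Prop :=
  exists s : seq (K * nat),
    forall g : nat -> K, Lip0 g -> phi g = \sum_(p <- s) p.1 * delta p.2 g.

(* phi \in F(M): phi is in the norm closure of span{delta(x)} in Lip_0(M)^*. *)
Definition in_free (K : numFieldType) (phi : functional K) : Prop :=
  forall eps : K, 0 < eps ->
    exists psi : functional K, in_span_delta psi /\ dnorm_le (fsub phi psi) eps.

(* \hat f : F(M) -> F(M), phi |-> phi o C_f where C_f g = g o f; this is the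
   bounded linear operator with \hat f (delta x) = delta (f x). *)
Definition fhat (K : numFieldType) (f : nat -> nat) (phi : functional K)
  : functional K := fun g => phi (g \o f).

(* T : F(M) -> F(M) is a compact operator: the image of the closed unit ball
   of F(M) is totally bounded in norm (equivalently relatively compact, as
   F(M) is a Banach space). *)
Definition compact_op_free (K : numFieldType)
    (T : functional K -> functional K) : Prop :=
  forall eps : K, 0 < eps ->
    exists (n : nat) (c : nat -> functional K),
      forall phi : functional K, in_free phi -> dnorm_le phi 1 ->
        exists i : nat, (i < n)%N /\ dnorm_le (fsub (T phi) (c i)) eps.

From mathcomp Require Import all_boot all_order all_algebra.
From mathcomp Require Import reals.
From mathcomp.real_closed Require Import complex.
From mathcomp Require Import zify ring lra.
Set Implicit Arguments. Unset Strict Implicit. Unset Printing Implicit Defensive.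
Import Order.TTheory GRing.Theory Num.Theory.
Local Open Scope ring_scope.

(* A function [g] with [g 0 = 0] is 1-Lipschitz on M exactly when
   [|g n| <= n!] for all [n].  Since [f] lowers the index, [g \o f] satisfies
   [|g (f n)| <= (n-1)! = n!/n]: beyond any [N] it is an [(N+1)]-fold shrunk
   element of the unit ball, and below [N] it is a combination, with
   coefficients in the unit disc, of the [N] functions [k! * 1_{k+1}].  So
   [\hat f phi] is determined, up to about [1/N], by the [N] values of [phi]
   on these functions, which range over a totally bounded set. *)

Lemma Mdist_eq0 x y : (Mdist x y == 0%N) = (x == y).
Proof.
rewrite /Mdist; case: ifP => // _.
by have := fact_gt0 x; have := fact_gt0 y; do 2?case: ifP => _; lia.
Qed.

Lemma Mdist_fM x y : (Mdist (fM x) (fM y) <= Mdist x y)%N.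
Proof.
have fact_fM n : ((fM n)`! <= n`!)%N by case: n => //= n; apply/leq_fact.
have := fact_fM x; have := fact_fM y; rewrite /Mdist /fM.
by case: x => [|x]; case: y => [|y] //=; rewrite ?eqSS; do ![case: ifP] => //=; lia.
Qed.

Lemma M_not_totally_bounded (R : realType) : ~ M_totally_bounded R.
Proof.
move=> /(_ 1 ltr01) [n [c c_net]].
have [i [lt_in]] := c_net (\sum_(j < n) c j).+1.
rewrite -[1]/(1%:R) ltr_nat ltnS leqn0 Mdist_eq0 => /eqP Ec.
have : (c i <= \sum_(j < n) c j)%N by rewrite (bigD1 (Ordinal lt_in)) ?leq_addr.
by rewrite -Ec ltnn.
Qed.

Lemma norm_sum_mul_le (R : numDomainType) N (c x : nat -> R) (e : R) :
  (forall k, `|c k| <= 1) -> (forall k, (k < N)%N -> `|x k| <= e) ->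
  `|\sum_(k < N) c k * x k| <= e *+ N.
Proof.
move=> c1 xe; rewrite (le_trans (ler_norm_sum _ _ _)) //.
rewrite -[N in e *+ N]card_ord -sumr_const.
by apply: ler_sum => k _; rewrite normrM -[e]mul1r ler_pM ?xe.
Qed.

Section FreeSpace.
Variable K : numFieldType.

Lemma lip1_norm_le_fact (g : nat -> K) : g 0%N = 0 -> lip1 g ->
  forall n, `|g n| <= n`!%:R.
Proof.
move=> g0 g1 [|n]; first by rewrite g0 normr0.
by have := g1 n.+1 0%N; rewrite g0 subr0.
Qed.

Lemma unit_ball_of_norm_le_fact (u : nat -> K) :
  u 0%N = 0 -> (forall n, `|u n| <= n`!%:R) -> Lip0 u /\ lip1 u.
Proof.
move=> u0 le_u; suff u1 : lip1 u.
  by split=> //; split=> //; exists 1 => x y; rewrite mul1r.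
move=> x y; rewrite /Mdist; case: ifP => [/eqP -> | _]; first by rewrite subrr normr0.
case: ifP => [/eqP -> | _]; first by rewrite u0 sub0r normrN.
case: ifP => [/eqP -> | _]; first by rewrite u0 subr0.
by rewrite natrD (le_trans (ler_normB _ _)) ?lerD.
Qed.

Lemma Lip0_comp_fM (g : nat -> K) : Lip0 g -> Lip0 (g \o fM).
Proof.
case=> g0 [L gL]; split=> //; exists `|L| => x y /=.
have le_gL := gL (fM x) (fM y).
have Ld_ge0 := le_trans (normr_ge0 _) le_gL.
rewrite -(ger0_norm Ld_ge0) normrM normr_nat in le_gL.
by rewrite (le_trans le_gL) // ler_wpM2l // ler_nat Mdist_fM.
Qed.

Lemma lip1_comp_fM (g : nat -> K) : lip1 g -> lip1 (g \o fM).
Proof. by move=> g1 x y; rewrite (le_trans (g1 _ _)) // ler_nat Mdist_fM. Qed.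

Lemma in_free_fhat_fM (phi : functional K) : in_free phi -> in_free (fhat fM phi).
Proof.
move=> free_phi eps eps_gt0; have [psi [[s psiE] phi_psi]] := free_phi eps eps_gt0.
exists (fhat fM psi); split.
  exists [seq (p.1, fM p.2) | p <- s] => g Lg.
  by rewrite /fhat psiE ?big_map //; apply: Lip0_comp_fM.
by move=> g Lg g1; apply: phi_psi; [apply: Lip0_comp_fM | apply: lip1_comp_fM].
Qed.

Lemma in_span_delta_linear (psi : functional K) N (c : nat -> K)
    (F : nat -> nat -> K) (a : K) (w h : nat -> K) :
  in_span_delta psi -> (forall k, Lip0 (F k)) -> Lip0 w -> Lip0 h ->
  (forall n, h n = \sum_(k < N) c k * F k n + a * w n) ->
  psi h = \sum_(k < N) c k * psi (F k) + a * psi w.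
Proof.
case=> s psiE LF Lw Lh hE; rewrite psiE // (psiE w) //.
under [in RHS]eq_bigr do rewrite psiE //.
rewrite /delta /=; under eq_bigr do rewrite hE mulrDr mulr_sumr.
rewrite big_split /= exchange_big !mulr_sumr; congr (_ + _).
  by apply: eq_bigr => k _; rewrite mulr_sumr; apply: eq_bigr => p _; ring.
by apply: eq_bigr => p _; ring.
Qed.

Definition bump (k : nat) : nat -> K := fun n => if n == k.+1 then k`!%:R else 0.

Lemma bump_unit_ball k : Lip0 (bump k) /\ lip1 (bump k).
Proof.
apply: unit_ball_of_norm_le_fact => // n; rewrite /bump; case: eqP => [-> | _].
  by rewrite normr_nat ler_nat leq_fact.
by rewrite normr0.
Qed.

Definition tail (N : nat) (h : nat -> K) : nat -> K :=
  fun n => if (n <= N)%N then 0 else N.+1%:R * h n.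

Lemma tail_comp_fM_unit_ball (g : nat -> K) N : g 0%N = 0 -> lip1 g ->
  Lip0 (tail N (g \o fM)) /\ lip1 (tail N (g \o fM)).
Proof.
move=> g0 g1; apply: unit_ball_of_norm_le_fact => // n; rewrite /tail.
case: leqP => [_ | lt_Nn]; first by rewrite normr0.
case: n lt_Nn => // n lt_Nn; rewrite normrM normr_nat factS natrM.
by rewrite ler_pM ?ler_nat // (lip1_norm_le_fact g0 g1).
Qed.

Lemma comp_fM_decomp (g : nat -> K) N n : g 0%N = 0 ->
  (g \o fM) n =
  \sum_(k < N) g k / k`!%:R * bump k n + N.+1%:R^-1 * tail N (g \o fM) n.
Proof.
move=> g0; rewrite /tail; case: leqP => [le_nN | lt_Nn].
  rewrite mulr0 addr0; case: n le_nN => [_ | m lt_mN] /=.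
    by rewrite g0 big1 // => k _; rewrite /bump mulr0.
  rewrite (bigD1 (Ordinal lt_mN)) //= /bump eqxx divfK ?pnatr_eq0 -?lt0n ?fact_gt0 //.
  rewrite big1 ?addr0 // => k /eqP neq_km; case: eqP => [[km] | _]; last by rewrite mulr0.
  by case: neq_km; apply: val_inj.
rewrite big1 ?add0r => [|k _]; first by rewrite mulKf ?pnatr_eq0.
by rewrite /bump; case: eqP => [nk | _]; [move: (ltn_ord k); lia | rewrite mulr0].
Qed.

Definition center N (v : seq K) : functional K :=
  fun g => \sum_(k < N) g k / k`!%:R * v`_k.

(* Functionals are arbitrary maps on [nat -> K]; linearity is only available
   for the span approximant [psi], so the estimate goes through it. *)
Lemma fhat_fM_near_center (phi psi : functional K) N (v : seq K) (e : K) :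
  in_span_delta psi -> dnorm_le (fsub phi psi) e -> dnorm_le phi 1 ->
  (forall k, (k < N)%N -> `|phi (bump k) - v`_k| <= e) ->
  dnorm_le (fsub (fhat fM phi) (center N v)) (e *+ (N.+1).*2 + N.+1%:R^-1).
Proof.
move=> span_psi phi_psi phi1 v_near g Lg g1; rewrite /fsub /fhat /center.
have g0 : g 0%N = 0 by case: Lg.
set h := g \o fM; set t := tail N h; set c := fun k => g k / k`!%:R.
have [Lt t1] := tail_comp_fM_unit_ball N g0 g1.
have Lh : Lip0 h by apply: Lip0_comp_fM.
have h1 : lip1 h by apply: lip1_comp_fM.
have c1 k : `|c k| <= 1.
  rewrite normrM normfV normr_nat ler_pdivrMr ?mul1r ?ltr0n ?fact_gt0 //.
  exact: lip1_norm_le_fact.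
have psi_h : psi h = \sum_(k < N) c k * psi (bump k) + N.+1%:R^-1 * psi t.
  apply: in_span_delta_linear => // [k | n]; first by case: (bump_unit_ball k).
  exact: comp_fM_decomp.
have sum_mulrB (x y : nat -> K) : \sum_(k < N) c k * (x k - y k) =
    \sum_(k < N) c k * x k - \sum_(k < N) c k * y k.
  by rewrite -sumrB; apply: eq_bigr => k _; rewrite mulrBr.
have -> : phi h - \sum_(k < N) c k * v`_k =
    (phi h - psi h) + \sum_(k < N) c k * (psi (bump k) - phi (bump k))
    + \sum_(k < N) c k * (phi (bump k) - v`_k)
    + N.+1%:R^-1 * (psi t - phi t) + N.+1%:R^-1 * phi t.
  rewrite (sum_mulrB (fun k => psi (bump k)) (fun k => phi (bump k))).
  by rewrite (sum_mulrB (fun k => phi (bump k)) (nth 0 v)) psi_h; ring.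
have inv_le1 : `|N.+1%:R^-1 : K| <= 1.
  by rewrite normfV normr_nat invf_le1 ?ler1n ?ltr0n.
have le_phih : `|phi h - psi h| <= e := phi_psi h Lh h1.
have le_psi_phi : `|\sum_(k < N) c k * (psi (bump k) - phi (bump k))| <= e *+ N.
  apply: (norm_sum_mul_le (x := fun k => psi (bump k) - phi (bump k))) => // k _.
  rewrite distrC.
  by have [Lb b1] := bump_unit_ball k; apply: phi_psi Lb b1.
have le_phi_v : `|\sum_(k < N) c k * (phi (bump k) - v`_k)| <= e *+ N.
  exact: (norm_sum_mul_le (x := fun k => phi (bump k) - v`_k)).
have le_psit : `|N.+1%:R^-1 * (psi t - phi t)| <= e.
  by rewrite normrM -[e]mul1r ler_pM // distrC; apply: phi_psi Lt t1.
have le_phit : `|N.+1%:R^-1 * phi t| <= N.+1%:R^-1.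
  by rewrite normrM -[leRHS]mulr1 ler_pM ?(phi1 t Lt t1) // ger0_norm ?invr_ge0.
have -> : e *+ (N.+1).*2 = e + e *+ N + e *+ N + e.
  by rewrite -addnn addSnnS !mulrnDr !mulrS; ring.
by do 4![apply: le_trans (ler_normD _ _) _; apply: lerD => //].
Qed.

End FreeSpace.

Section Compactness.
Variable K : numFieldType.
Hypothesis inv_nat_le : forall e : K, 0 < e -> exists N : nat, N.+1%:R^-1 <= e.
Hypothesis unit_disk_net : forall e : K, 0 < e -> exists S : seq K,
  forall b : K, `|b| <= 1 -> exists2 z, z \in S & `|b - z| <= e.

Lemma unit_cube_net (e : K) N : 0 < e -> exists vs : seq (seq K),
  forall b : nat -> K, (forall k, (k < N)%N -> `|b k| <= 1) ->
  exists2 v, v \in vs & forall k, (k < N)%N -> `|b k - v`_k| <= e.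
Proof.
move=> e_gt0; have [S SP] := unit_disk_net e_gt0; elim: N => [|N [vs vsP]].
  by exists [:: [::]] => b _; exists [::] => //; rewrite mem_seq1.
exists [seq z :: v | z <- S, v <- vs] => b b1.
have [z zS bz] := SP (b 0%N) (b1 0%N isT).
have [v vvs bv] := vsP (fun k => b k.+1) (fun k => b1 k.+1).
exists (z :: v) => [|[|k] //]; first by apply/allpairsP; exists (z, v).
exact: bv.
Qed.

Lemma compact_fhat_fM : compact_op_free (fhat (K := K) fM).
Proof.
move=> eps eps_gt0; have [N leN] := inv_nat_le (divr_gt0 eps_gt0 (ltr0n _ 2)).
pose e := eps / 2 / (N.+1).*2%:R.
have e_gt0 : 0 < e by rewrite !divr_gt0 ?ltr0n.
have [vs vsP] := unit_cube_net N e_gt0.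
exists (size vs), (fun i => center N (nth [::] vs i)) => phi free_phi phi1.
have [psi [span_psi phi_psi]] := free_phi e e_gt0.
have [|v v_in v_near] := vsP (fun k => phi (bump K k)).
  by move=> k _; have [Lb b1] := bump_unit_ball K k; apply: phi1 Lb b1.
exists (index v vs); rewrite index_mem nth_index //; split=> // g Lg g1.
apply: le_trans (fhat_fM_near_center span_psi phi_psi phi1 v_near Lg g1) _.
by rewrite /e -[_ *+ _.*2]mulr_natr divfK ?pnatr_eq0 // [leRHS](splitr eps) lerD.
Qed.

End Compactness.

Lemma archi_inv_nat_le (R : archiRealFieldType) (e : R) :
  0 < e -> exists N : nat, N.+1%:R^-1 <= e.
Proof.
move=> e_gt0; exists (Num.truncn e^-1).
rewrite -[leRHS]invrK lef_pV2 ?posrE ?invr_gt0 ?ltr0n // ltW //.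
exact: truncnS_gt.
Qed.

Lemma archi_unit_disk_net (R : archiRealFieldType) (e : R) :
  0 < e -> exists S : seq R,
  forall b : R, `|b| <= 1 -> exists2 z, z \in S & `|b - z| <= e.
Proof.
move=> e_gt0; exists [seq j%:R * e - 1 | j <- iota 0 (Num.truncn (2 / e)).+1] => b.
rewrite ler_norml => /andP[b_ge b_le].
have b1_ge0 : 0 <= b + 1 by lra.
have := truncn_itv (divr_ge0 b1_ge0 (ltW e_gt0)); set j := Num.truncn _.
rewrite ler_pdivlMr // -natr1 ltr_pdivrMr // mulrDl mul1r => /andP[le_jb lt_bj].
exists (j%:R * e - 1).
  apply/mapP; exists j => //.
  by rewrite mem_iota ltnS le_truncn // ler_pM2r ?invr_gt0 //; lra.
by rewrite ler_norml; apply/andP; split; lra.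
Qed.

Section ComplexNets.
Variable R : realType.
Local Open Scope complex_scope.

Lemma normc_real (r : R) : `|r%:C| = `|r|%:C.
Proof. by rewrite normc_def /= expr0n addr0 sqrtr_sqr. Qed.

Lemma normc_i : `|'i%C : R[i]| = 1.
Proof. by rewrite normc_def /= expr0n expr1n add0r sqrtr1. Qed.

Lemma complex_inv_nat_le (e : R[i]) : 0 < e -> exists N : nat, N.+1%:R^-1 <= e.
Proof.
case: e => a b; rewrite ltcE /= => /andP[/eqP -> a_gt0].
have [N leN] := archi_inv_nat_le a_gt0; exists N.
by rewrite complexr0 -(rmorph_nat (real_complex R)) -fmorphV lecR.
Qed.

Lemma complex_unit_disk_net (e : R[i]) : 0 < e -> exists S : seq R[i],
  forall z : R[i], `|z| <= 1 -> exists2 w, w \in S & `|z - w| <= e.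
Proof.
case: e => a b; rewrite ltcE /= => /andP[/eqP -> a_gt0].
have [S SP] := archi_unit_disk_net (divr_gt0 a_gt0 (ltr0n R 2)).
exists [seq x%:C + 'i%C * y%:C | x <- S, y <- S] => z z1.
have norm_le1 (r : R) : `|r%:C| <= 1 -> `|r| <= 1.
  by rewrite normc_real -[1 : R[i]]/((1 : R)%:C) lecR.
have Re1 : `|complex.Re z| <= 1 :> R.
  by apply: norm_le1; rewrite normc_real (le_trans (normc_ge_Re z)).
have Im1 : `|complex.Im z| <= 1 :> R.
  apply: norm_le1; rewrite normc_real -normrN -ReiNIm (le_trans (normc_ge_Re _)) //.
  by rewrite normrM normc_i mulr1.
have [x xS zx] := SP _ Re1; have [y yS zy] := SP _ Im1.
exists (x%:C + 'i%C * y%:C); first by apply/allpairsP; exists (x, y).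
have -> : z - (x%:C + 'i%C * y%:C) =
    (complex.Re z - x)%:C + 'i%C * (complex.Im z - y)%:C.
  by rewrite {1}(complexE z) !rmorphB; ring.
rewrite complexr0 (le_trans (ler_normD _ _)) // normrM normc_i mul1r !normc_real.
by rewrite -rmorphD lecR [leRHS](splitr a) lerD.
Qed.

End ComplexNets.

Theorem mainTheorem13 (R : realType) :
  M_lipschitz R fM /\
  (forall y : nat, exists x : nat, fM x = y) /\
  ~ M_totally_bounded R /\
  (forall phi : functional R, in_free phi -> in_free (fhat fM phi)) /\
  compact_op_free (fhat (K := R) fM) /\
  (forall phi : functional R[i], in_free phi -> in_free (fhat fM phi)) /\
  compact_op_free (fhat (K := R[i]) fM).
Proof.
split; first by exists 1 => x y; rewrite mul1r ler_nat Mdist_fM.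
split; first by move=> y; exists y.+1.
split; first exact: M_not_totally_bounded.
split; first exact: in_free_fhat_fM.
split; first exact: compact_fhat_fM (@archi_inv_nat_le R) (@archi_unit_disk_net R).
split; first exact: in_free_fhat_fM.
exact: compact_fhat_fM (@complex_inv_nat_le R) (@complex_unit_disk_net R).
Qed.
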